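(* Let $\lambda>0$, $t>0$ and $n\ge 2$. Consider a Yule tree with rate $\lambda$ whose initial bifurcation occurred time $t$ before the present, conditioned on having exactly $n$ leaves at the present. Let $TL_n(t)$ be the sum of all its edge lengths and $L_n(t)=\mathbb{E}[TL_n(t)]$. Then $$L_n(t)=2t+\frac{n-2}{\lambda}\bigl(1-y(\lambda t)\bigr),\qquad y(x):=\frac{x e^{-x}}{1-e^{-x}},$$ and $y$ is strictly decreasing on $(0,\infty)$ with $\lim_{x\to 0^+}y(x)=1$ and $\lim_{x\to\infty}y(x)=0$. *)

From Stdlib Require Import Reals Lra ClassicalEpsilon.
Open Scope R_scope.

(* Total Riemann integral: the Stdlib Riemann integral of f on [a,b] when f is
   Riemann integrable there, and 0 otherwise (the value does not depend on
   the integrability proof, by RiemannInt_P5). *)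
Definition Rint (f : R -> R) (a b : R) : R :=
  match excluded_middle_informative (inhabited (Riemann_integrable f a b)) with
  | left h => RiemannInt (epsilon h (fun _ => True))
  | right _ => 0
  end.

(* The Yule process of rate lam: a pure-birth process in which, while there
   are k lineages, each lineage splits at rate lam, i.e. the waiting time to
   the next bifurcation is Exp(k*lam) and the count goes k -> k+1.
   For a Yule tree, the total edge length accumulated during a time interval
   is the integral of the number of lineages over that interval.

   yule_PM lam n j s = (P, M), where, starting with k = n - j lineages and
   running the process for time s,
     P = Prob(exactly n lineages at the end),
     M = E[(total edge length accumulated) ; exactly n lineages at the end].
   Defined by first-jump decomposition. *)
Fixpoint yule_PM (lam : R) (n : nat) (j : nat) (s : R) : R * R :=
  match j with
  | O => (exp (- (INR n * lam * s)), INR n * s * exp (- (INR n * lam * s)))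
  | S j' =>
      let k := INR (n - S j') in
      (Rint (fun u => k * lam * exp (- (k * lam * u)) *
                      fst (yule_PM lam n j' (s - u))) 0 s,
       Rint (fun u => k * lam * exp (- (k * lam * u)) *
                      (k * u * fst (yule_PM lam n j' (s - u))
                       + snd (yule_PM lam n j' (s - u)))) 0 s)
  end.

(* L_n(t): expected total edge length of a rate-lam Yule tree whose initial
   bifurcation occurred time t before the present (so 2 lineages at time 0),
   conditioned on having exactly n leaves at the present:
   E[TL ; N_t = n] / P(N_t = n). *)
Definition yule_expected_length (lam : R) (n : nat) (t : R) : R :=
  snd (yule_PM lam n (n - 2) t) / fst (yule_PM lam n (n - 2) t).

Definition yfun (x : R) : R := x * exp (- x) / (1 - exp (- x)).

From Stdlib Require Import Reals Lra Lia ClassicalEpsilon FunctionalExtensionality.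
From Coquelicot Require Import Coquelicot.
Open Scope R_scope.

(* The first-jump recursion yule_PM is
   solved in closed form.  Writing q(s) = 1 - exp(-lam s) and
   c_j = C(n-1, j), starting from n - j lineages we get
     P_j(s) = c_j exp(-(n-j) lam s) q(s)^j,
     M_j(s) = c_j exp(-(n-j) lam s) (q(s)^j ((n-j) s + j/lam)
                                     - j s exp(-lam s) q(s)^(j-1)).
   Both are proved by induction on j: each step is one Riemann integral,
   computed by the fundamental theorem of calculus from an explicit
   antiderivative.  The ratio M_j / P_j = (n-j) s + j/lam - j s e^(-lam s)/q(s)
   at j = n - 2 is exactly the claimed formula.

   For x > 0, y(x) = x / (e^x - 1); from
   1 + x <= e^x we get 1 - x <= y(x) <= 1 and x y(x) <= 4, which give the
   two limits, and strict decrease follows from the mean value theorem since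
   y'(x) = (e^x - 1 - x e^x) / (e^x - 1)^2 < 0. *)

Lemma Rint_FTC (F f : R -> R) (a b : R) :
  (forall x, derivable_pt_lim F x (f x)) -> continuity f -> Rint f a b = F b - F a.
Proof.
  intros HD Hc.
  set (diff := fun x => exist (fun l => derivable_pt_lim F x l) (f x) (HD x) : derivable_pt F x).
  set (C1F := {| c1 := F; diff0 := diff; cont1 := Hc |}).
  assert (pr : Riemann_integrable f a b).
  { destruct (Rle_dec a b).
    - apply continuity_implies_RiemannInt; auto.
    - apply RiemannInt_P1, continuity_implies_RiemannInt; [lra | auto]. }
  unfold Rint. destruct (excluded_middle_informative _) as [h | h].
  - rewrite (RiemannInt_P5 _ pr). exact (@FTC_Riemann C1F a b pr).
  - exfalso; apply h; constructor; exact pr.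
Qed.

Lemma Rint_ext (f g : R -> R) (a b : R) :
  (forall x, f x = g x) -> Rint f a b = Rint g a b.
Proof. intros H. now rewrite (functional_extensionality f g H). Qed.

Lemma exp_gt1 (x : R) : 0 < x -> 1 < exp x.
Proof. intros Hx; pose proof (exp_ineq1 x ltac:(lra)); lra. Qed.

Section YuleClosedForm.
Variables (lam : R) (n : nat).
Hypothesis Hlam : 0 < lam.

(* yule_coef j = prod_(i=1..j) (n-i)/i = C(n-1, j). *)
Fixpoint yule_coef (j : nat) : R :=
  match j with O => 1 | S j' => yule_coef j' * INR (n - S j') / INR (S j') end.

Definition yule_P (j : nat) (s : R) : R :=
  yule_coef j * exp (- (INR (n - j) * lam * s)) * (1 - exp (- (lam * s))) ^ j.

Definition yule_M (j : nat) (s : R) : R :=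
  yule_coef j * (exp (- (INR (n - j) * lam * s)) * (1 - exp (- (lam * s))) ^ j
                   * (INR (n - j) * s + INR j / lam)
                 - INR j * s * exp (- (INR (n - j) * lam * s)) * exp (- (lam * s))
                   * (1 - exp (- (lam * s))) ^ pred j).

(* The exponential factor of P_j(s - u), rewritten around the integration
   weight exp(-k lam u) of the next step (here k + 1 = n - j). *)
Lemma exp_shift (k s u : R) :
  exp (- ((k + 1) * lam * (s - u)))
  = exp (- (k * lam * s)) * exp (- (lam * (s - u))) * / exp (- (k * lam * u)).
Proof. rewrite <- exp_Ropp, <- !exp_plus. f_equal. ring. Qed.

Lemma INR_sub_succ (j : nat) : (S j <= n)%nat -> INR (n - j) = INR (n - S j) + 1.
Proof. intros Hj. replace (n - j)%nat with (S (n - S j)) by lia. apply S_INR. Qed.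

Lemma yule_P_step (j : nat) (s : R) : (S j <= n)%nat ->
  Rint (fun u => INR (n - S j) * lam * exp (- (INR (n - S j) * lam * u))
                 * yule_P j (s - u)) 0 s = yule_P (S j) s.
Proof.
  intros Hj. pose proof (INR_sub_succ j Hj) as Hk1. set (k := INR (n - S j)) in *.
  assert (Hj1 : INR (S j) <> 0) by (apply not_0_INR; lia).
  rewrite (Rint_FTC (fun u => - (yule_coef j * k / INR (S j)) * exp (- (k * lam * s))
                              * (1 - exp (- (lam * (s - u)))) ^ S j)).
  - unfold yule_P; cbn [yule_coef]; fold k.
    rewrite Rminus_diag, Rminus_0_r, Rmult_0_r, Ropp_0, exp_0, Rminus_diag.
    simpl pow. field; auto.
  - intros u. apply is_derive_Reals. auto_derive; [exact I |].
    unfold yule_P. rewrite Hk1, exp_shift.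
    assert (exp (- (k * lam * u)) <> 0) by (apply Rgt_not_eq, exp_pos).
    change (match j with 0%nat => 1 | S _ => INR j + 1 end) with (INR (S j)).
    unfold Rminus. field; auto.
  - unfold yule_P; reg.
Qed.

Lemma yule_M_step (j : nat) (s : R) : (S j <= n)%nat ->
  Rint (fun u => INR (n - S j) * lam * exp (- (INR (n - S j) * lam * u))
                 * (INR (n - S j) * u * yule_P j (s - u) + yule_M j (s - u))) 0 s
  = yule_M (S j) s.
Proof.
  intros Hj. pose proof (INR_sub_succ j Hj) as Hk1. set (k := INR (n - S j)) in *.
  assert (Hj1 : INR (S j) <> 0) by (apply not_0_INR; lia).
  assert (lam <> 0) by lra.
  rewrite (Rint_FTC (fun u => yule_coef j * k * exp (- (k * lam * s)) *
          ((u - (k + INR (S j)) * s / INR (S j) - 1 / lam) * (1 - exp (- (lam * (s - u)))) ^ S j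
           + (s - u) * (1 - exp (- (lam * (s - u)))) ^ j))).
  - unfold yule_M; cbn [yule_coef pred]; fold k.
    rewrite Rminus_diag, Rminus_0_r, Rmult_0_r, Ropp_0, exp_0, Rminus_diag.
    simpl pow. field; auto.
  - intros u. apply is_derive_Reals. auto_derive; [exact I |].
    unfold yule_P, yule_M. rewrite Hk1, exp_shift.
    assert (exp (- (k * lam * u)) <> 0) by (apply Rgt_not_eq, exp_pos).
    destruct j as [| m]; cbn [pred pow]; rewrite ?S_INR in *; simpl INR in *;
      unfold Rminus; field; auto.
  - unfold yule_P, yule_M; reg.
Qed.

Lemma yule_PM_closed_form (j : nat) (s : R) :
  (j <= n)%nat -> yule_PM lam n j s = (yule_P j s, yule_M j s).
Proof.
  revert s; induction j as [| j IH]; intros s Hj.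
  - unfold yule_P, yule_M; simpl; rewrite Nat.sub_0_r. f_equal; field; lra.
  - cbn [yule_PM].
    rewrite <- yule_P_step, <- yule_M_step by exact Hj.
    f_equal; apply Rint_ext; intros u; now rewrite IH by lia.
Qed.

Lemma yule_coef_neq0 (j : nat) : (j < n)%nat -> yule_coef j <> 0.
Proof.
  induction j as [| j IH]; intros Hj; cbn [yule_coef]; [lra |].
  assert (INR (n - S j) <> 0) by (apply not_0_INR; lia).
  assert (INR (S j) <> 0) by (apply not_0_INR; lia).
  assert (yule_coef j <> 0) by (apply IH; lia).
  unfold Rdiv; repeat apply Rmult_integral_contrapositive_currified; auto.
  now apply Rinv_neq_0_compat.
Qed.

Lemma yule_ratio (j : nat) (s : R) : (j < n)%nat -> 0 < s ->
  yule_M j s / yule_P j s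
  = INR (n - j) * s + INR j / lam * (1 - lam * s * exp (- (lam * s)) / (1 - exp (- (lam * s)))).
Proof.
  intros Hj Hs. pose proof (yule_coef_neq0 j Hj).
  assert (Hq : exp (- (lam * s)) < 1) by (rewrite <- exp_0; apply exp_increasing; nra).
  pose proof (exp_pos (- (lam * s))). pose proof (exp_pos (- (INR (n - j) * lam * s))).
  assert (lam <> 0) by lra.
  unfold yule_P, yule_M. destruct j as [| m]; cbn [pred pow].
  - change (INR 0) with 0. field; repeat split; lra.
  - assert ((1 - exp (- (lam * s))) ^ m <> 0) by (apply pow_nonzero; lra).
    field; repeat split; lra.
Qed.

End YuleClosedForm.

Definition yfun_pos (x : R) : R := x / (exp x - 1).

Lemma yfun_eq_pos (x : R) : 0 < x -> yfun x = yfun_pos x.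
Proof.
  intros Hx. unfold yfun, yfun_pos. pose proof (exp_gt1 x Hx).
  rewrite exp_Ropp. assert (exp x <> 0) by lra.
  replace (1 - / exp x) with ((exp x - 1) / exp x) by (field; lra).
  field; lra.
Qed.

(* 1 - x <= y(x) <= 1 and 0 < y(x), from 1 + x <= e^x and 1 - x <= e^(-x). *)
Lemma yfun_pos_bounds (x : R) : 0 < x -> 1 - x <= yfun_pos x <= 1 /\ 0 < yfun_pos x.
Proof.
  intros Hx. pose proof (exp_gt1 x Hx). unfold yfun_pos.
  assert (HD : 0 < exp x - 1) by lra.
  assert (Hinv : exp (- x) * exp x = 1) by (rewrite <- exp_plus, Rplus_opp_l; apply exp_0).
  pose proof (exp_ineq1_le x). pose proof (exp_ineq1_le (- x)).
  split; [split |].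
  - apply Rle_div_r; [exact HD | nra].
  - apply Rle_div_l; [exact HD | lra].
  - apply Rdiv_lt_0_compat; lra.
Qed.

(* x y(x) <= 4, from e^x - 1 >= (1 + x/2)^2 - 1 >= x^2 / 4. *)
Lemma yfun_pos_decay (x : R) : 0 < x -> x * yfun_pos x <= 4.
Proof.
  intros Hx. pose proof (exp_gt1 x Hx). unfold yfun_pos.
  assert (He : exp x = exp (x / 2) * exp (x / 2)) by (rewrite <- exp_plus; f_equal; field).
  pose proof (exp_ineq1_le (x / 2)).
  assert (Hsq : x * x / 4 <= exp x - 1) by (rewrite He; nra).
  replace (x * (x / (exp x - 1))) with (x * x / (exp x - 1)) by (field; lra).
  apply Rle_div_l; lra.
Qed.

(* y is strictly decreasing on (0, oo): its derivative is negative there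
   because e^x - 1 < x e^x, i.e. 1 - x < e^(-x). *)
Lemma yfun_decreasing (a b : R) : 0 < a -> a < b -> yfun b < yfun a.
Proof.
  intros Ha Hab. rewrite !yfun_eq_pos by lra.
  destruct (MVT_cor2 yfun_pos (fun x => ((exp x - 1) - x * exp x) / (exp x - 1) ^ 2) a b Hab)
    as [c [Hc Hac]].
  - intros c Hc. pose proof (exp_gt1 c ltac:(lra)).
    apply is_derive_Reals. unfold yfun_pos. auto_derive; [lra |]. field; lra.
  - assert (Hneg : ((exp c - 1) - c * exp c) / (exp c - 1) ^ 2 < 0).
    { pose proof (exp_gt1 c ltac:(lra)).
      pose proof (exp_ineq1 (- c) ltac:(lra)).
      assert (exp (- c) * exp c = 1) by (rewrite <- exp_plus, Rplus_opp_l; apply exp_0).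
      apply Rdiv_neg_pos; nra. }
    nra.
Qed.

Theorem theorem2 (lam t : R) (n : nat) (Hlam : 0 < lam) (Ht : 0 < t) (Hn : (2 <= n)%nat) :
  yule_expected_length lam n t = 2 * t + INR (n - 2) / lam * (1 - yfun (lam * t))
  /\ (forall a b : R, 0 < a -> a < b -> yfun b < yfun a)
  /\ limit1_in yfun (fun x => 0 < x) 1 0
  /\ (forall eps : R, 0 < eps -> exists M : R, forall x : R, M < x -> Rabs (yfun x) < eps).
Proof.
  split; [| split; [| split]].
  - unfold yule_expected_length.
    rewrite yule_PM_closed_form by (auto; lia); cbn [fst snd].
    rewrite yule_ratio by (auto; lia).
    replace (n - (n - 2))%nat with 2%nat by lia.
    unfold yfun. simpl INR. ring.
  - exact yfun_decreasing.
  - intros eps Heps. exists eps. split; [lra |].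
    intros x [Hx Hd]. simpl in *. unfold R_dist in *.
    rewrite Rminus_0_r, Rabs_pos_eq in Hd by lra.
    rewrite yfun_eq_pos by exact Hx. pose proof (yfun_pos_bounds x Hx).
    apply Rabs_def1; lra.
  - intros eps Heps. exists (4 / eps). intros x Hx.
    assert (Hx0 : 0 < x) by (apply Rlt_trans with (4 / eps); auto; apply Rdiv_lt_0_compat; lra).
    rewrite yfun_eq_pos by exact Hx0.
    pose proof (yfun_pos_bounds x Hx0). pose proof (yfun_pos_decay x Hx0).
    apply Rlt_div_l in Hx; [| lra].
    rewrite Rabs_pos_eq by lra. nra.
Qed.
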